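(* If some set maximizing $\widehat{re}$ over nonempty subsets of $\mathbb{S}$ has cardinality $k$, then $\{1,2,\dots,k\}$ also maximizes $\widehat{re}$ over nonempty subsets of $\mathbb{S}$.
   Context: Sellers $\mathbb{S}=\{1,\dots,n\}$ with product qualities $\theta_1\ge\theta_2\ge\dots\ge\theta_n\ge0$. $W$ is the Lambert W function on $[0,\infty)$ ($W(x)e^{W(x)}=x$) and $w_i=W(e^{\theta_i-1})$, so $w_1\ge\dots\ge w_n>0$. For nonempty $S\subseteq\mathbb{S}$, the Cournot-equilibrium revenue when $S$ is displayed is $\widehat{re}(S)=\frac{\sum_{i\in S}(w_i^2+w_i)}{1+\sum_{i\in S}w_i}$. *)

From Stdlib Require Import Reals Lra List.
Open Scope R_scope.

(* Sellers are indexed 0..n-1 (seller i+1 of the paper is index i).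
   A subset S of sellers is a boolean predicate on nat; only indices < n matter. *)

Definition sumS (n : nat) (S : nat -> bool) (f : nat -> R) : R :=
  fold_right Rplus 0 (map (fun i => if S i then f i else 0) (seq 0 n)).

Definition nonemptyS (n : nat) (S : nat -> bool) : Prop :=
  exists i, (i < n)%nat /\ S i = true.

Definition cardS (n : nat) (S : nat -> bool) : nat :=
  length (filter S (seq 0 n)).

Definition prefixS (k : nat) : nat -> bool := fun i => Nat.ltb i k.

Definition is_LambertW (W : R -> R) : Prop :=
  forall x, 0 <= x -> 0 <= W x /\ W x * exp (W x) = x.

Definition wval (W : R -> R) (theta : nat -> R) (i : nat) : R :=
  W (exp (theta i - 1)).

(* Cournot-equilibrium revenue re^(S) *)
Definition re_hat (W : R -> R) (theta : nat -> R) (n : nat) (S : nat -> bool) : R :=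
  sumS n S (fun i => wval W theta i ^ 2 + wval W theta i)
  / (1 + sumS n S (wval W theta)).

Definition is_maximizer (W : R -> R) (theta : nat -> R) (n : nat) (S : nat -> bool) : Prop :=
  nonemptyS n S /\
  forall T : nat -> bool, nonemptyS n T -> re_hat W theta n T <= re_hat W theta n S.

From Stdlib Require Import Reals Lra Lia List Classical.
Open Scope R_scope.

(* Let S be a maximizer, r = re(S) its value and w_i the weights.
   Since the denominator 1 + sum_T w is positive, re(T) <= r is equivalent to
   sum_{i in T} g(i) <= r for the "gain" g(i) = w_i^2 + w_i - r w_i, with
   equality for T = S.  Removing a member i of S thus shows g(i) >= 0, i.e.
   w_i >= r - 1 for every i in S.  On [r - 1, oo) the map x |-> x^2 + x - r x
   is nondecreasing, and the weights are nonincreasing in the index (W is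
   increasing).  With c = g(k-1), the gains of the prefix P = {0..k-1} outside
   S are >= c and those of S outside P are <= c; as |P| = |S| = k an exchange
   argument gives sum_P g >= sum_S g = r, hence re(P) >= r, so P is a maximizer.
   The file first develops finite sums over subsets (sumS) and cardinalities,
   then the monotonicity facts about W, then the gain reformulation, and
   finally the exchange step and the theorem. *)

Lemma fold_right_Rplus_init (l : list R) (a : R) :
  fold_right Rplus a l = fold_right Rplus 0 l + a.
Proof. induction l; simpl; lra. Qed.

Lemma sumS_0 (T : nat -> bool) (f : nat -> R) : sumS 0 T f = 0.
Proof. reflexivity. Qed.

Lemma sumS_S (n : nat) (T : nat -> bool) (f : nat -> R) :
  sumS (S n) T f = sumS n T f + (if T n then f n else 0).
Proof.
  unfold sumS. rewrite seq_S, map_app, fold_right_app. simpl.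
  rewrite fold_right_Rplus_init. lra.
Qed.

Lemma sumS_ext (n : nat) (T U : nat -> bool) (f : nat -> R) :
  (forall i, (i < n)%nat -> T i = U i) -> sumS n T f = sumS n U f.
Proof.
  induction n as [|n IH]; intros HTU; [reflexivity|].
  rewrite !sumS_S, (HTU n) by lia. rewrite IH; [reflexivity|].
  intros i Hi. apply HTU. lia.
Qed.

Lemma sumS_nonneg (n : nat) (T : nat -> bool) (f : nat -> R) :
  (forall i, 0 <= f i) -> 0 <= sumS n T f.
Proof.
  intros Hf. induction n as [|n IH]; [rewrite sumS_0; lra|].
  rewrite sumS_S. specialize (Hf n). destruct (T n); lra.
Qed.

Lemma sumS_sub_scal (n : nat) (T : nat -> bool) (f g : nat -> R) (c : R) :
  sumS n T (fun i => f i - c * g i) = sumS n T f - c * sumS n T g.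
Proof.
  induction n as [|n IH]; [rewrite !sumS_0; lra|].
  rewrite !sumS_S, IH. destruct (T n); lra.
Qed.

Lemma sumS_empty (n : nat) (T : nat -> bool) (f : nat -> R) :
  ~ nonemptyS n T -> sumS n T f = 0.
Proof.
  induction n as [|n IH]; intros HT; [reflexivity|].
  assert (Tn : T n = false).
  { destruct (T n) eqn:E; [|reflexivity]. exfalso; apply HT. exists n; split; [lia|exact E]. }
  rewrite sumS_S, Tn, IH; [lra|].
  intros [i [Hi Ti]]. apply HT. exists i; split; [lia|exact Ti].
Qed.

Lemma sumS_remove (n : nat) (T : nat -> bool) (f : nat -> R) (i : nat) :
  (i < n)%nat -> T i = true ->
  sumS n T f = sumS n (fun j => andb (T j) (negb (Nat.eqb j i))) f + f i.
Proof.
  induction n as [|n IH]; intros Hi Ti; [lia|].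
  rewrite !sumS_S. destruct (Nat.eq_dec i n) as [->|Hne].
  - rewrite Ti, Nat.eqb_refl. simpl.
    rewrite (sumS_ext n (fun j => andb (T j) (negb (Nat.eqb j n))) T); [lra|].
    intros j Hj. destruct (Nat.eqb_spec j n); [lia|]. apply Bool.andb_true_r.
  - rewrite IH by (lia || exact Ti). destruct (Nat.eqb_spec n i); [lia|].
    simpl. rewrite Bool.andb_true_r. lra.
Qed.

Lemma cardS_S (n : nat) (T : nat -> bool) :
  cardS (S n) T = (cardS n T + (if T n then 1 else 0))%nat.
Proof.
  unfold cardS. rewrite seq_S, filter_app, length_app. simpl. destruct (T n); reflexivity.
Qed.

Lemma cardS_mono (n : nat) (T U : nat -> bool) :
  (forall i, (i < n)%nat -> T i = true -> U i = true) -> (cardS n T <= cardS n U)%nat.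
Proof.
  induction n as [|n IH]; intros HTU; [apply Nat.le_refl|].
  rewrite !cardS_S. specialize (IH (fun i Hi => HTU i ltac:(lia))).
  destruct (T n) eqn:E; [rewrite (HTU n ltac:(lia) E)|destruct (U n)]; simpl; lia.
Qed.

Lemma cardS_prefix (n k : nat) : cardS n (prefixS k) = Nat.min k n.
Proof.
  induction n as [|n IH]; [rewrite Nat.min_0_r; reflexivity|].
  rewrite cardS_S, IH. unfold prefixS. destruct (Nat.ltb_spec n k); lia.
Qed.

Lemma cardS_le (n : nat) (T : nat -> bool) : (cardS n T <= n)%nat.
Proof.
  rewrite <- (Nat.min_id n) at 2. rewrite <- cardS_prefix.
  apply cardS_mono. intros i Hi _. apply Nat.ltb_lt, Hi.
Qed.

Lemma cardS_pos (n : nat) (T : nat -> bool) : nonemptyS n T -> (1 <= cardS n T)%nat.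
Proof.
  intros [i [Hi Ti]]. unfold cardS.
  assert (In i (filter T (seq 0 n))) by (apply filter_In; split; [apply in_seq; lia|exact Ti]).
  destruct (filter T (seq 0 n)); simpl in *; [contradiction|lia].
Qed.

Lemma sumS_exchange_gen (n : nat) (A B : nat -> bool) (h : nat -> R) (c : R) :
  (forall i, (i < n)%nat -> A i = true -> B i = false -> c <= h i) ->
  (forall i, (i < n)%nat -> B i = true -> A i = false -> h i <= c) ->
  sumS n B h - c * INR (cardS n B) <= sumS n A h - c * INR (cardS n A).
Proof.
  induction n as [|n IH]; intros HA HB; [rewrite !sumS_0; unfold cardS; simpl; lra|].
  rewrite !sumS_S, !cardS_S, !plus_INR.
  specialize (IH (fun i (Hi : (i < n)%nat) => HA i ltac:(lia))
                 (fun i (Hi : (i < n)%nat) => HB i ltac:(lia))).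
  specialize (HA n ltac:(lia)). specialize (HB n ltac:(lia)).
  destruct (A n), (B n); simpl in *;
    [|specialize (HA eq_refl eq_refl)|specialize (HB eq_refl eq_refl)|]; lra.
Qed.

Lemma sumS_exchange (n : nat) (A B : nat -> bool) (h : nat -> R) (c : R) :
  cardS n A = cardS n B ->
  (forall i, (i < n)%nat -> A i = true -> B i = false -> c <= h i) ->
  (forall i, (i < n)%nat -> B i = true -> A i = false -> h i <= c) ->
  sumS n B h <= sumS n A h.
Proof.
  intros Hcard HA HB. pose proof (sumS_exchange_gen n A B h c HA HB) as Hgen.
  rewrite Hcard in Hgen. lra.
Qed.

Lemma LambertW_pos (W : R -> R) : is_LambertW W -> forall x, 0 < x -> 0 < W x.
Proof.
  intros hW x Hx. destruct (hW x ltac:(lra)) as [[Hpos|Hzero] Hfix]; [exact Hpos|].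
  rewrite <- Hzero in Hfix. lra.
Qed.

Lemma LambertW_mono (W : R -> R) :
  is_LambertW W -> forall x y, 0 <= x -> x <= y -> W x <= W y.
Proof.
  intros hW x y Hx Hxy. destruct (hW x Hx) as [Wx Fx]. destruct (hW y ltac:(lra)) as [Wy Fy].
  destruct (Rle_lt_dec (W x) (W y)) as [|Hlt]; [assumption|].
  assert (exp (W y) < exp (W x)) by (apply exp_increasing; exact Hlt).
  assert (0 < exp (W y)) by apply exp_pos.
  assert (W y * exp (W y) < W x * exp (W x)) by nra. lra.
Qed.

Section Weights.

Variables (W : R -> R) (theta : nat -> R) (n : nat).
Hypothesis hW : is_LambertW W.
Hypothesis hmono : forall i j, (i <= j)%nat -> (j < n)%nat -> theta j <= theta i.

Lemma wval_pos (i : nat) : 0 < wval W theta i.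
Proof. apply (LambertW_pos W hW), exp_pos. Qed.

Lemma wval_antitone (i j : nat) :
  (i <= j)%nat -> (j < n)%nat -> wval W theta j <= wval W theta i.
Proof.
  intros Hij Hj. apply (LambertW_mono W hW); [left; apply exp_pos|].
  pose proof (hmono i j Hij Hj) as Hth.
  destruct (Req_dec (theta j) (theta i)) as [->|]; [lra|].
  left; apply exp_increasing; lra.
Qed.

Definition gain (r : R) (i : nat) : R :=
  wval W theta i ^ 2 + wval W theta i - r * wval W theta i.

Lemma denominator_pos (T : nat -> bool) : 0 < 1 + sumS n T (wval W theta).
Proof.
  pose proof (sumS_nonneg n T (wval W theta) (fun i => Rlt_le _ _ (wval_pos i))). lra.
Qed.

Lemma re_hat_nonneg (T : nat -> bool) : 0 <= re_hat W theta n T.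
Proof.
  unfold re_hat. apply Rmult_le_pos.
  - apply sumS_nonneg. intros i. pose proof (wval_pos i). nra.
  - left. apply Rinv_0_lt_compat, denominator_pos.
Qed.

Lemma re_hat_sub (r : R) (T : nat -> bool) :
  (re_hat W theta n T - r) * (1 + sumS n T (wval W theta)) = sumS n T (gain r) - r.
Proof.
  unfold re_hat, gain. rewrite sumS_sub_scal. pose proof (denominator_pos T). field. lra.
Qed.

Lemma re_hat_le_iff (r : R) (T : nat -> bool) :
  re_hat W theta n T <= r <-> sumS n T (gain r) <= r.
Proof.
  pose proof (re_hat_sub r T). pose proof (denominator_pos T). split; intros; nra.
Qed.

Lemma re_hat_ge_iff (r : R) (T : nat -> bool) :
  r <= re_hat W theta n T <-> r <= sumS n T (gain r).
Proof.
  pose proof (re_hat_sub r T). pose proof (denominator_pos T). split; intros; nra.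
Qed.

Lemma gain_le (r : R) (i j : nat) :
  r - 1 <= wval W theta i -> wval W theta i <= wval W theta j -> gain r i <= gain r j.
Proof.
  unfold gain. pose proof (wval_pos i). intros. nra.
Qed.

Section Maximizer.

Variable S : nat -> bool.
Hypothesis hS : is_maximizer W theta n S.

Let r := re_hat W theta n S.

Lemma gain_sum_le (T : nat -> bool) : sumS n T (gain r) <= r.
Proof.
  destruct (classic (nonemptyS n T)) as [HT|HT].
  - apply re_hat_le_iff, (proj2 hS), HT.
  - rewrite sumS_empty by exact HT. apply re_hat_nonneg.
Qed.

Lemma gain_sum_maximizer : r <= sumS n S (gain r).
Proof. apply re_hat_ge_iff. apply Rle_refl. Qed.

Lemma maximizer_weight_lb (i : nat) :
  (i < n)%nat -> S i = true -> r - 1 <= wval W theta i.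
Proof.
  intros Hi Si.
  assert (Hgain : 0 <= gain r i).
  { pose proof (sumS_remove n S (gain r) i Hi Si).
    pose proof (gain_sum_le (fun j => andb (S j) (negb (Nat.eqb j i)))).
    pose proof gain_sum_maximizer. lra. }
  unfold gain in Hgain. pose proof (wval_pos i). nra.
Qed.

Lemma maximizer_tail_member :
  exists j, (cardS n S - 1 <= j)%nat /\ (j < n)%nat /\ S j = true.
Proof.
  destruct hS as [[i0 [Hi0 Si0]] _].
  apply NNPP. intros Hnone.
  assert (Hsub : (cardS n S <= cardS n (prefixS (cardS n S - 1)))%nat).
  { apply cardS_mono. intros i Hi Si. apply Nat.ltb_lt.
    destruct (Nat.lt_ge_cases i (cardS n S - 1)) as [|Hge]; [assumption|].
    exfalso. apply Hnone. exists i. auto. }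
  rewrite cardS_prefix in Hsub.
  assert (1 <= cardS n S)%nat by (apply cardS_pos; exists i0; auto).
  lia.
Qed.

Lemma gain_sum_prefix : r <= sumS n (prefixS (cardS n S)) (gain r).
Proof.
  set (k := cardS n S).
  destruct maximizer_tail_member as [j [Hkj [Hj Sj]]]. fold k in Hkj.
  assert (Hk : (1 <= k <= n)%nat).
  { split; [apply cardS_pos, (proj1 hS)|apply cardS_le]. }
  assert (Hpivot : r - 1 <= wval W theta (k - 1)).
  { pose proof (maximizer_weight_lb j Hj Sj). pose proof (wval_antitone (k - 1) j Hkj Hj). lra. }
  eapply Rle_trans; [apply gain_sum_maximizer|].
  apply (sumS_exchange n _ _ _ (gain r (k - 1))).
  - rewrite cardS_prefix. lia.
  - intros i Hi Pi _. apply Nat.ltb_lt in Pi.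
    apply gain_le; [exact Hpivot|]. apply wval_antitone; lia.
  - intros i Hi Si Pi. apply Nat.ltb_ge in Pi.
    apply gain_le; [apply maximizer_weight_lb; assumption|]. apply wval_antitone; lia.
Qed.

End Maximizer.

End Weights.

Theorem lemma8 (n : nat) (theta : nat -> R) (W : R -> R)
  (hW : is_LambertW W)
  (hmono : forall i j, (i <= j)%nat -> (j < n)%nat -> theta j <= theta i)
  (hnonneg : forall i, (i < n)%nat -> 0 <= theta i)
  (S : nat -> bool) (k : nat)
  (hS : is_maximizer W theta n S) (hk : cardS n S = k) :
  is_maximizer W theta n (prefixS k).
Proof.
  subst k.
  assert (Hk : (1 <= cardS n S <= n)%nat).
  { split; [apply cardS_pos, (proj1 hS)|apply cardS_le]. }
  split.
  - exists 0%nat. split; [lia|]. apply Nat.ltb_lt. lia.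
  - intros T HT. apply Rle_trans with (re_hat W theta n S); [exact (proj2 hS T HT)|].
    apply (re_hat_ge_iff W theta n hW).
    exact (gain_sum_prefix W theta n hW hmono S hS).
Qed.
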